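(* Let $F=(A,R)$ be an abstract argumentation framework and $S,S'$ initial sets of $F$ with $S\neq S'$. (1) If $S'$ is an unattacked initial set of $F$, then $S'$ is an unattacked initial set of $F^S$. (2) If $S'\to S$, then $S'$ is not an initial set of $F^S$. (3) If not $S'\to S$, then $S'\cap\bigcup\mathrm{IS}(F^S)\neq\emptyset$.
   Context: An abstract argumentation framework is a pair $F=(A,R)$ with $A$ finite and $R\subseteq A\times A$ ($a\to b$ means $(a,b)\in R$). $S^+=\{a\mid\exists b\in S:b\to a\}$, $S^-=\{a\mid\exists b\in S: a\to b\}$, and $S\to S'$ means $S^+\cap S'\neq\emptyset$. $S$ is admissible if conflict-free and every attacker of an element of $S$ is attacked by some element of $S$. An initial set is a non-empty admissible set with no non-empty admissible proper subset; $\mathrm{IS}(F)$ denotes the set of initial sets of $F$. An initial set $S$ is unattacked if $S^-=\emptyset$. The reduct is $F^S=(A',R\cap(A'\times A'))$ with $A'=A\setminus(S\cup S^+)$. *)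

(* An argumentation framework F = (A, R) is represented by a
   finite set of arguments A : {set T} over a finType T and a relation R : rel T;
   the effective attack relation of F is R restricted to A x A. This lets the
   reduct F^S = (A', R ∩ (A' x A')) be represented as (A', R). *)
From mathcomp Require Import all_boot.
Set Implicit Arguments. Unset Strict Implicit. Unset Printing Implicit Defensive.

Section AF.
Variables (T : finType) (A : {set T}) (R : rel T).

Definition att (a b : T) : bool := [&& a \in A, b \in A & R a b].

Definition splus (S : {set T}) : {set T} := [set a | [exists b in S, att b a]].
Definition sminus (S : {set T}) : {set T} := [set a | [exists b in S, att a b]].

Definition set_attacks (S S' : {set T}) : bool := splus S :&: S' != set0.

Definition conflict_free (S : {set T}) : bool :=
  [forall a in S, forall b in S, ~~ att a b].

Definition admissible (S : {set T}) : bool :=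
  [&& S \subset A, conflict_free S &
      [forall a in S, forall b, att b a ==> [exists c in S, att c b]]].

Definition initial (S : {set T}) : bool :=
  [&& S != set0, admissible S &
      [forall S' : {set T}, (S' \proper S) && (S' != set0) ==> ~~ admissible S']].

Definition IS : {set {set T}} := [set S | initial S].

Definition unattacked_initial (S : {set T}) : bool := initial S && (sminus S == set0).

Definition reduct_args (S : {set T}) : {set T} := A :\: (S :|: splus S).

End AF.

(* Restricting to a sub-framework preserves admissibility of a set that lives in it,
   and an unattacked set needs no defence, so an unattacked initial set S' <> S (which
   must be disjoint from S) stays initial in F^S.  If S' -> S, then S counter-attacks
   S', so part of S' lies in S^+ and is deleted.  If S' does not attack S, then S does
   not attack S' either, so S' \ S survives admissibly in F^S; being nonempty by
   minimality of S, it contains an initial set of F^S. *)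
From mathcomp Require Import all_boot.
Set Implicit Arguments. Unset Strict Implicit. Unset Printing Implicit Defensive.

Section Framework.
Variables (T : finType) (R : rel T).
Implicit Types (A S X Y : {set T}).

Lemma admP A X :
  reflect [/\ X \subset A, (forall a b, a \in X -> b \in X -> ~~ att A R a b) &
     (forall a b, a \in X -> att A R b a -> exists2 c, c \in X & att A R c b)]
  (admissible A R X).
Proof.
apply: (iffP and3P) => [[sXA /forallP cfX /forallP defX]|[sXA cfX defX]].
- split=> // [a b aX bX|a b aX hba].
    by have /implyP/(_ aX)/forallP/(_ b) := cfX a; rewrite bX.
  have /implyP/(_ aX)/forallP/(_ b) := defX a.
  by rewrite hba => /existsP[c /andP[cX hcb]]; exists c.
- split=> //; apply/forallP=> a; apply/implyP=> aX; apply/forallP=> b.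
    by apply/implyP=> bX; apply: cfX.
  apply/implyP=> hba; have [c cX hcb] := defX a b aX hba.
  by apply/existsP; exists c; rewrite cX.
Qed.

Lemma initial_minset A S :
  initial A R S = minset (fun X => (X != set0) && admissible A R X) S.
Proof.
apply/and3P/minsetP => [[neS admS /forallP minS]|[/andP[neS admS] minS]].
  split=> [|X /andP[neX admX] sXS]; first by rewrite neS.
  apply/eqP; apply: contraT => neqXS.
  by have := minS X; rewrite properEneq neqXS sXS neX admX.
split=> //; apply/forallP=> X; apply/implyP => /andP[ltXS neX].
apply/negP=> admX; have eqXS := minS X _ (proper_sub ltXS).
by move: ltXS; rewrite eqXS ?properxx // neX.
Qed.

Lemma initialP A S :
  reflect [/\ S != set0, admissible A R S &
             forall X, X \subset S -> X != set0 -> admissible A R X -> X = S]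
          (initial A R S).
Proof.
rewrite initial_minset; apply: (iffP minsetP) => [[/andP[neS admS] minS]|[neS admS minS]].
  by split=> // X sXS neX admX; apply: minS; rewrite ?neX.
by split=> [|X /andP[neX admX] sXS]; rewrite ?neS //; apply: minS.
Qed.

Lemma att_subset A1 A2 a b : A1 \subset A2 -> att A1 R a b -> att A2 R a b.
Proof. by move=> sA12 /and3P[a1 b1 hab]; rewrite /att (subsetP sA12 a) ?(subsetP sA12 b). Qed.

Lemma att_restrict A1 A2 a b :
  a \in A1 -> b \in A1 -> att A2 R a b -> att A1 R a b.
Proof. by move=> a1 b1 /and3P[_ _ hab]; rewrite /att a1 b1. Qed.

Lemma sminus_subset A1 A2 X : A1 \subset A2 -> sminus A1 R X \subset sminus A2 R X.
Proof.
move=> sA12; apply/subsetP=> a; rewrite !inE => /existsP[b /andP[bX hab]].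
by apply/existsP; exists b; rewrite bX (att_subset sA12).
Qed.

Lemma admissible_restrict A1 A2 X :
  A1 \subset A2 -> X \subset A1 -> admissible A2 R X -> admissible A1 R X.
Proof.
move=> sA12 sX1 /admP[_ cfX defX]; apply/admP; split=> // [a b aX bX|a b aX hba].
  by apply: contra (cfX a b aX bX); apply: att_subset.
have [c cX hcb] := defX a b aX (att_subset sA12 hba).
by exists c; rewrite // (att_restrict (subsetP sX1 c cX) _ hcb) //; case/and3P: hba.
Qed.

Lemma subset_unattacked_admissible A X Y :
  X \subset Y -> admissible A R Y -> sminus A R Y = set0 -> admissible A R X.
Proof.
move=> sXY /admP[sYA cfY _] unattY; apply/admP; split.
- exact: subset_trans sXY sYA.
- by move=> a b aX bX; apply: cfY; apply: (subsetP sXY).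
- move=> a b aX hba; have : b \in sminus A R Y.
    by rewrite inE; apply/existsP; exists a; rewrite (subsetP sXY).
  by rewrite unattY inE.
Qed.

Lemma initial_eq A S1 S2 : initial A R S1 -> initial A R S2 ->
  S1 :&: S2 != set0 -> admissible A R (S1 :&: S2) -> S1 = S2.
Proof.
move=> /initialP[_ _ min1] /initialP[_ _ min2] ne12 adm12.
by rewrite -(min1 _ (subsetIl _ _) ne12 adm12) (min2 _ (subsetIr _ _) ne12 adm12).
Qed.

Lemma initial_setD_neq0 A S S' : initial A R S -> initial A R S' -> S != S' ->
  S' :\: S != set0.
Proof.
move=> /initialP[_ _ minS] /initialP[neS' admS' _]; apply: contra.
by rewrite setD_eq0 => sS'S; rewrite (minS S' sS'S neS' admS').
Qed.

Lemma unattacked_initial_disjoint A S S' : initial A R S -> initial A R S' ->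
  S != S' -> sminus A R S' = set0 -> [disjoint S' & S].
Proof.
move=> iS iS' neqSS' unattS'; rewrite -setI_eq0 setIC; apply: contraNT neqSS' => neSS'.
have /initialP[_ admS' _] := iS'.
apply/eqP; apply: (initial_eq iS iS') => //.
exact: subset_unattacked_admissible (subsetIr _ _) admS' unattS'.
Qed.

Lemma unattacked_not_attacked A S X : sminus A R X = set0 -> ~~ set_attacks A R S X.
Proof.
move=> unattX; apply/negP => /set0Pn[a /setIP[]].
rewrite inE => /existsP[b /andP[_ hba]] aX.
have : b \in sminus A R X by rewrite inE; apply/existsP; exists a; rewrite aX.
by rewrite unattX inE.
Qed.

Lemma admissible_counterattacks A S X :
  admissible A R X -> set_attacks A R S X -> set_attacks A R X S.
Proof.
move=> /admP[_ _ defX] /set0Pn[a /setIP[]].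
rewrite inE => /existsP[b /andP[bS hba]] aX.
have [c cX hcb] := defX a b aX hba.
by apply/set0Pn; exists b; rewrite inE bS andbT inE; apply/existsP; exists c; rewrite cX.
Qed.

Lemma sub_reduct_args A S X : (X \subset reduct_args A R S) =
  [&& X \subset A, [disjoint X & S] & ~~ set_attacks A R S X].
Proof.
rewrite /reduct_args /set_attacks setIC setI_eq0 negbK setDE setCU !subsetI.
by rewrite -!disjoints_subset.
Qed.

Lemma reduct_args_sub A S : reduct_args A R S \subset A.
Proof. exact: subsetDl. Qed.

Lemma initial_restrict A1 A2 X : A1 \subset A2 -> X \subset A1 ->
  sminus A2 R X = set0 -> initial A2 R X -> initial A1 R X.
Proof.
move=> sA12 sX1 unattX /initialP[neX admX minX]; apply/initialP; split=> //.
  exact: admissible_restrict admX.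
move=> Y sYX neY _; apply: minX => //.
exact: subset_unattacked_admissible sYX admX unattX.
Qed.

(* The counter-attackers of an attacker b of E \ S cannot lie in S, for then b would
   lie in S^+; and they lie outside S^+ because S does not attack E. *)
Lemma admissible_reduct A S E : admissible A R E -> ~~ set_attacks A R S E ->
  admissible (reduct_args A R S) R (E :\: S).
Proof.
move=> /admP[sEA cfE defE] nattSE.
have sEA' : E :\: S \subset reduct_args A R S.
  rewrite sub_reduct_args (subset_trans (subsetDl _ _) sEA) /=.
  have /subsetDP[_ ->] := subxx (E :\: S).
  apply: contra nattSE => /set0Pn[a /setIP[aS /setDP[aE _]]].
  by apply/set0Pn; exists a; rewrite inE aS.
apply/admP; split=> // [a b /setDP[aE _] /setDP[bE _]|a b /setDP[aE _] hba].
  by apply: contra (cfE a b aE bE); apply: att_subset (reduct_args_sub _ _).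
have [c cE hcb] := defE a b aE (att_subset (reduct_args_sub _ _) hba).
have bA' : b \in reduct_args A R S by case/and3P: hba.
have cES : c \in E :\: S.
  rewrite inE cE andbT; apply: contraTN bA' => cS.
  rewrite !inE negb_and negbK; apply/orP; left; apply/orP; right.
  by apply/existsP; exists c; rewrite cS.
by exists c; last exact: att_restrict (subsetP sEA' c cES) bA' hcb.
Qed.

Lemma admissible_meets_initial A X : X != set0 -> admissible A R X ->
  X :&: cover (IS A R) != set0.
Proof.
move=> neX admX.
have [|Y minY sYX] := @minset_exists _ (fun Y => (Y != set0) && admissible A R Y) X.
  by rewrite neX.
have /andP[/set0Pn[y yY] _] := minsetp minY; move: minY; rewrite -initial_minset => iY.
apply/set0Pn; exists y; rewrite inE (subsetP sYX) //=.
by apply/bigcupP; exists Y; rewrite ?inE.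
Qed.

End Framework.

Theorem proposition4 (T : finType) (A : {set T}) (R : rel T) (S S' : {set T}) :
  initial A R S -> initial A R S' -> S != S' ->
  (unattacked_initial A R S' -> unattacked_initial (reduct_args A R S) R S') /\
  (set_attacks A R S' S -> ~~ initial (reduct_args A R S) R S') /\
  (~~ set_attacks A R S' S ->
     S' :&: cover (IS (reduct_args A R S) R) != set0).
Proof.
move=> iS iS' neqSS'.
have /initialP[_ admS _] := iS; have /initialP[_ admS' _] := iS'.
have /admP[sS'A _ _] := admS'.
split; [|split].
- case/andP=> _ /eqP unattS'.
  have sS'A' : S' \subset reduct_args A R S.
    by rewrite sub_reduct_args sS'A (unattacked_initial_disjoint iS iS')
      ?unattacked_not_attacked.
  apply/andP; split; first exact: initial_restrict (reduct_args_sub _ _ _) sS'A' _ iS'.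
  by rewrite -subset0 -unattS' sminus_subset ?reduct_args_sub.
- move=> /(admissible_counterattacks admS) attSS'.
  apply: contraL attSS' => /initialP[_ /admP[sS'A' _ _] _].
  by move: sS'A'; rewrite sub_reduct_args => /and3P[].
- move=> nattS'S; have nattSS' := contra (admissible_counterattacks admS') nattS'S.
  have := admissible_meets_initial (initial_setD_neq0 iS iS' neqSS')
    (admissible_reduct admS' nattSS').
  by apply: contraNN; rewrite -!subset0; apply: subset_trans; rewrite setSI ?subsetDl.
Qed.
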